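(* Let $\sigma:\mathbb{R}\to\mathbb{R}$ be $\sigma(x)=\operatorname{sgn}(x)x^2$. Then every nonzero point of $\mathbb{R}^2$ has a dense orbit in $\mathbb{R}^2$ under the action of $\Gamma(\sigma)$. Moreover, the set $\bigcup_{n=0}^{\infty}\bigcup_{k=0}^{\infty}E_\sigma^{-k}\big(\{E_\sigma^n(1,0)\}\big)$ is a discrete subset of $\mathbb{R}_{\geq 0}^2$.
   Context: For an increasing odd homeomorphism $\sigma:\mathbb{R}\to\mathbb{R}$, define $h_\sigma(x,y)=(x+\sigma^{-1}(y),y)$ and $v_\sigma(x,y)=(x,\sigma(x)+y)$ on $\mathbb{R}^2$, and let $\Gamma(\sigma)$ be the group generated by $h_\sigma,v_\sigma$. The generalized Euclidean algorithm is the map $E_\sigma:\mathbb{R}_{\geq0}^2\to\mathbb{R}_{\geq0}^2$ given by $E_\sigma(x,y)=(x-\sigma^{-1}(y),y)$ if $y<\sigma(x)$ and $E_\sigma(x,y)=(x,y-\sigma(x))$ if $y\geq\sigma(x)$; $E_\sigma^{-k}(S)$ denotes the preimage of $S$ under the $k$-th iterate. *)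

From Stdlib Require Import Reals.
Open Scope R_scope.

Definition pt := (R * R)%type.

Definition sig2 (x : R) : R := if Rle_dec 0 x then x * x else - (x * x).
Definition sig2_inv (y : R) : R := if Rle_dec 0 y then sqrt y else - sqrt (- y).

Definition h_gen (sigma siginv : R -> R) (p : pt) : pt := (fst p + siginv (snd p), snd p).
Definition h_gen_inv (sigma siginv : R -> R) (p : pt) : pt := (fst p - siginv (snd p), snd p).
Definition v_gen (sigma siginv : R -> R) (p : pt) : pt := (fst p, sigma (fst p) + snd p).
Definition v_gen_inv (sigma siginv : R -> R) (p : pt) : pt := (fst p, snd p - sigma (fst p)).

Inductive Gamma (sigma siginv : R -> R) : (pt -> pt) -> Prop :=
| Gamma_id : Gamma sigma siginv (fun p => p)
| Gamma_h : forall g, Gamma sigma siginv g ->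
    Gamma sigma siginv (fun p => h_gen sigma siginv (g p))
| Gamma_hinv : forall g, Gamma sigma siginv g ->
    Gamma sigma siginv (fun p => h_gen_inv sigma siginv (g p))
| Gamma_v : forall g, Gamma sigma siginv g ->
    Gamma sigma siginv (fun p => v_gen sigma siginv (g p))
| Gamma_vinv : forall g, Gamma sigma siginv g ->
    Gamma sigma siginv (fun p => v_gen_inv sigma siginv (g p)).

Definition orbit (sigma siginv : R -> R) (p : pt) : pt -> Prop :=
  fun q => exists g, Gamma sigma siginv g /\ q = g p.

Definition dist2 (p q : pt) : R :=
  sqrt ((fst p - fst q) ^ 2 + (snd p - snd q) ^ 2).

Definition dense2 (S : pt -> Prop) : Prop :=
  forall (q : pt) (eps : R), 0 < eps -> exists s, S s /\ dist2 s q < eps.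

Definition discrete2 (S : pt -> Prop) : Prop :=
  forall p, S p -> exists eps, 0 < eps /\ forall q, S q -> dist2 p q < eps -> q = p.

Definition nonneg_quadrant (p : pt) : Prop := 0 <= fst p /\ 0 <= snd p.

Definition Euclid (sigma siginv : R -> R) (p : pt) : pt :=
  if Rlt_dec (snd p) (sigma (fst p)) then (fst p - siginv (snd p), snd p)
  else (fst p, snd p - sigma (fst p)).

Definition backward_set (sigma siginv : R -> R) : pt -> Prop :=
  fun p => exists n k : nat, nonneg_quadrant p /\
    Nat.iter k (Euclid sigma siginv) p = Nat.iter n (Euclid sigma siginv) (1, 0).

(* Since sigma is multiplicative, every element of Gamma(sigma) commutes with the dilations
   (x, y) |-> (l x, sigma(l) y), and it is a homeomorphism.  Reducing x modulo sigma^-1(y) and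
   then y modulo sigma(x) divides |y| by 4, so every nonzero orbit contains points (a, b) with
   b <> 0 arbitrarily small; horizontal steps of length sigma^-1(b) then reach every point
   (t, 0) of the axis up to any precision.  Hence the closure of the orbit contains every
   g(t, 0) = (t a, sigma(t) b), where (a, b) = g(1, 0).  These points are dense as soon as the
   ratios b / sigma(a) over the orbit of (1, 0) are dense in R, and an explicit family in that
   orbit has ratios 1/sigma(w) + i, i in Z, with w ranging over m - n / sqrt(2n + 1): a set
   dense in R, since these offsets tend to infinity with vanishing increments.

   Every point of the backward set reaches the fixed point (1, 0) of E.  Such points have
   x >= 1 and y = 0 or y >= 1, so E lowers x + y by at least 1 on them; since each point has
   at most two preimages under E, only finitely many of them satisfy x + y <= n. *)

From Stdlib Require Import Reals Lra Lia Psatz List Classical.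
From Coquelicot Require Import Coquelicot.
Open Scope R_scope.

(** * Topology of the plane *)

Definition adherent {T : UniformSpace} (S : T -> Prop) (x : T) : Prop :=
  forall P, locally x P -> exists s, S s /\ P s.

Lemma adherent_trans {T : UniformSpace} (S A : T -> Prop) (x : T) :
  (forall a, A a -> adherent S a) -> adherent A x -> adherent S x.
Proof.
  intros HA Hx P [eps Heps].
  destruct (Hx _ (locally_ball x (pos_div_2 eps))) as [a [Aa Ha]].
  destruct (HA a Aa _ (locally_ball a (pos_div_2 eps))) as [s [Ss Hs]].
  exists s; split; [exact Ss|].
  apply Heps. rewrite <- (Rplus_half_diag eps). exact (ball_triangle _ _ _ _ _ Ha Hs).
Qed.

Lemma adherent_continuous {T U : UniformSpace} (S : T -> Prop) (S' : U -> Prop)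
  (f : T -> U) (x : T) :
  (forall s, S s -> S' (f s)) -> continuous f x -> adherent S x -> adherent S' (f x).
Proof.
  intros HS Hf Hx P HP.
  destruct (Hx _ (Hf P HP)) as [s [Ss Ps]].
  exists (f s); auto.
Qed.

Lemma adherent_locally {T : UniformSpace} (S Q : T -> Prop) (x : T) :
  adherent S x -> locally x Q -> adherent (fun s => S s /\ Q s) x.
Proof.
  intros Hx HQ P HP.
  destruct (Hx _ (filter_and _ _ HQ HP)) as [s [Ss [Qs Ps]]].
  exists s; auto.
Qed.

Lemma continuous_pair {U V W : UniformSpace} (f : U -> V) (g : U -> W) (x : U) :
  continuous f x -> continuous g x -> continuous (fun z => (f z, g z)) x.
Proof.
  intros Hf Hg. apply (continuous_comp_2 f g pair); [exact Hf | exact Hg |].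
  apply (continuous_ext (fun z => z)); [intros [a b]; reflexivity | apply continuous_id].
Qed.

Lemma opp_continuous (f : R -> R) :
  (forall x, continuous f x) -> forall x, continuous (fun t => - f t) x.
Proof. intros Hf x. exact (continuous_opp f x (Hf x)). Qed.

Lemma shear_h_continuous (a : R -> R) (p : R * R) :
  (forall y, continuous a y) -> continuous (fun q : R * R => (fst q + a (snd q), snd q)) p.
Proof.
  intro Ha. destruct p as [x y]. apply continuous_pair; [|apply continuous_snd].
  apply (continuous_plus (fun q : R * R => fst q) (fun q : R * R => a (snd q))).
  - apply continuous_fst.
  - apply continuous_comp; [apply continuous_snd | apply Ha].
Qed.

Lemma shear_v_continuous (b : R -> R) (p : R * R) :
  (forall x, continuous b x) -> continuous (fun q : R * R => (fst q, b (fst q) + snd q)) p.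
Proof.
  intro Hb. destruct p as [x y]. apply continuous_pair; [apply continuous_fst|].
  apply (continuous_plus (fun q : R * R => b (fst q)) (fun q : R * R => snd q)).
  - apply continuous_comp; [apply continuous_fst | apply Hb].
  - apply continuous_snd.
Qed.

Lemma dist2_le_abs p q : dist2 p q <= Rabs (fst p - fst q) + Rabs (snd p - snd q).
Proof.
  unfold dist2. set (a := fst p - fst q). set (b := snd p - snd q).
  pose proof (Rabs_pos a). pose proof (Rabs_pos b).
  rewrite <- (sqrt_square (Rabs a + Rabs b)) by lra. apply sqrt_le_1_alt.
  rewrite <- (pow2_abs a), <- (pow2_abs b). nra.
Qed.

Lemma abs_le_dist2 p q :
  Rabs (fst p - fst q) <= dist2 p q /\ Rabs (snd p - snd q) <= dist2 p q.
Proof.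
  unfold dist2. rewrite <- (sqrt_Rsqr_abs (fst p - fst q)), <- (sqrt_Rsqr_abs (snd p - snd q)).
  unfold Rsqr. pose proof (pow2_ge_0 (fst p - fst q)). pose proof (pow2_ge_0 (snd p - snd q)).
  split; apply sqrt_le_1_alt; simpl in *; lra.
Qed.

Lemma dist2_pos p q : p <> q -> 0 < dist2 p q.
Proof.
  destruct p as [x y], q as [x' y']; intro Hne.
  destruct (abs_le_dist2 (x, y) (x', y')) as [Hx Hy]; simpl in Hx, Hy.
  destruct (Req_dec x x') as [<-|Ex]; [destruct (Req_dec y y') as [<-|Ey]; [now elim Hne|]|].
  - enough (0 < Rabs (y - y')) by lra. apply Rabs_pos_lt; lra.
  - enough (0 < Rabs (x - x')) by lra. apply Rabs_pos_lt; lra.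
Qed.

Lemma ball_pt (p q : pt) (e : R) :
  ball p e q <-> Rabs (fst q - fst p) < e /\ Rabs (snd q - snd p) < e.
Proof. destruct p, q; reflexivity. Qed.

Lemma dense2_of_adherent (S : pt -> Prop) : (forall q, adherent S q) -> dense2 S.
Proof.
  intros H q eps Heps.
  apply (H q (fun s => dist2 s q < eps)).
  exists (pos_div_2 (mkposreal eps Heps)); intros s Hs.
  destruct (proj1 (ball_pt q s _) Hs) as [Hx Hy]; clear Hs; simpl in Hx, Hy.
  pose proof (dist2_le_abs s q). lra.
Qed.

Lemma adherent_fst_neq0 (q : pt) : adherent (fun r : pt => fst r <> 0) q.
Proof.
  intros P [eps Heps]. pose proof (cond_pos eps). destruct q as [x y].
  destruct (Req_dec x 0) as [->|Hx].
  - exists (eps / 2, y); split; [simpl; lra|].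
    apply Heps, ball_pt; simpl. rewrite Rminus_0_r, Rabs_pos_eq, Rminus_diag, Rabs_R0; lra.
  - exists (x, y); split; [exact Hx|].
    apply Heps, ball_pt; simpl. rewrite !Rminus_diag, Rabs_R0; lra.
Qed.

Lemma exists_frac_in_01 (r : R) : exists j : Z, 0 < r - IZR j <= 1.
Proof.
  destruct (archimed (- r)) as [H1 H2].
  exists (- up (- r))%Z. rewrite opp_IZR. lra.
Qed.

Lemma exists_nearest_multiple (x s : R) :
  s <> 0 -> exists k : Z, Rabs (x - IZR k * s) <= Rabs s / 2.
Proof.
  intro Hs. destruct (exists_frac_in_01 (x / s + / 2)) as [k Hk].
  exists k.
  replace (x - IZR k * s) with (s * (x / s - IZR k)) by (field; exact Hs).
  rewrite Rabs_mult.
  assert (Rabs (x / s - IZR k) <= / 2) by (apply Rabs_le; lra).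
  pose proof (Rabs_pos s). nra.
Qed.

Lemma nat_crossing (u : nat -> R) (L : R) (a b : nat) :
  (a <= b)%nat -> u a < L -> L <= u b -> exists n, (a <= n)%nat /\ u n < L <= u (S n).
Proof.
  intros Hab Ha Hb. induction Hab as [|b Hab IH]; [lra|].
  destruct (Rlt_le_dec (u b) L) as [Hlt|Hge].
  - exists b; split; [exact Hab | lra].
  - exact (IH Hge).
Qed.

Lemma shifts_adherent (u : nat -> R) :
  (forall eps, 0 < eps -> exists N, forall n, (N <= n)%nat -> u (S n) - u n < eps) ->
  (forall L N, exists n, (N <= n)%nat /\ L <= u n) ->
  forall w, adherent (fun z => exists (n : nat) (m : Z), z = IZR m - u n) w.
Proof.
  intros Hstep Hunb w P [eps Heps].
  destruct (Hstep eps (cond_pos eps)) as [N HN].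
  destruct (archimed (u N + w)) as [Hm _]. set (m := up (u N + w)) in Hm.
  destruct (Hunb (IZR m - w) N) as [n' [Hn' Hun']].
  destruct (nat_crossing u (IZR m - w) N n' Hn' ltac:(lra) Hun') as [n [Hn [Hlt Hge]]].
  exists (IZR m - u (S n)); split; [exists (S n), m; reflexivity|].
  apply Heps. specialize (HN n Hn).
  change (Rabs (IZR m - u (S n) - w) < eps). apply Rabs_def1; lra.
Qed.

(** * The group generated by h and v *)

Definition scale (sigma : R -> R) (l : R) (p : pt) : pt := (l * fst p, sigma l * snd p).

Section Generated_group.

Context {sigma siginv : R -> R}.

Local Notation Gam := (Gamma sigma siginv).
Local Notation orb := (orbit sigma siginv).

Lemma Gamma_comp f g : Gam f -> Gam g -> Gam (fun p => f (g p)).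
Proof. intros Hf Hg; induction Hf; [exact Hg | constructor; assumption ..]. Qed.

Lemma orbit_refl p : orb p p.
Proof. exists (fun q => q); split; [constructor | reflexivity]. Qed.

Lemma orbit_Gamma p q g : orb p q -> Gam g -> orb p (g q).
Proof.
  intros [f [Hf ->]] Hg.
  exists (fun r => g (f r)); split; [apply Gamma_comp | reflexivity]; assumption.
Qed.

Lemma orbit_trans p q r : orb p q -> orb q r -> orb p r.
Proof. intros Hq [g [Hg ->]]. exact (orbit_Gamma p q g Hq Hg). Qed.

Lemma orbit_h p x y : orb p (x, y) -> orb p (x + siginv y, y).
Proof. intro H. exact (orbit_Gamma _ _ _ H (Gamma_h _ _ _ (Gamma_id _ _))). Qed.

Lemma orbit_hinv p x y : orb p (x, y) -> orb p (x - siginv y, y).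
Proof. intro H. exact (orbit_Gamma _ _ _ H (Gamma_hinv _ _ _ (Gamma_id _ _))). Qed.

Lemma orbit_v p x y : orb p (x, y) -> orb p (x, sigma x + y).
Proof. intro H. exact (orbit_Gamma _ _ _ H (Gamma_v _ _ _ (Gamma_id _ _))). Qed.

Lemma orbit_vinv p x y : orb p (x, y) -> orb p (x, y - sigma x).
Proof. intro H. exact (orbit_Gamma _ _ _ H (Gamma_vinv _ _ _ (Gamma_id _ _))). Qed.

Lemma orbit_h_Z p x y (m : Z) : orb p (x, y) -> orb p (x + IZR m * siginv y, y).
Proof.
  intro H. induction m as [|m IH|m IH] using Z.peano_ind.
  - rewrite Rmult_0_l, Rplus_0_r. exact H.
  - rewrite succ_IZR.
    replace (x + (IZR m + 1) * siginv y) with (x + IZR m * siginv y + siginv y) by ring.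
    exact (orbit_h _ _ _ IH).
  - rewrite <- Z.sub_1_r, minus_IZR.
    replace (x + (IZR m - 1) * siginv y) with (x + IZR m * siginv y - siginv y) by ring.
    exact (orbit_hinv _ _ _ IH).
Qed.

Lemma orbit_v_Z p x y (m : Z) : orb p (x, y) -> orb p (x, y + IZR m * sigma x).
Proof.
  intro H. induction m as [|m IH|m IH] using Z.peano_ind.
  - rewrite Rmult_0_l, Rplus_0_r. exact H.
  - rewrite succ_IZR.
    replace (y + (IZR m + 1) * sigma x) with (sigma x + (y + IZR m * sigma x)) by ring.
    exact (orbit_v _ _ _ IH).
  - rewrite <- Z.sub_1_r, minus_IZR.
    replace (y + (IZR m - 1) * sigma x) with (y + IZR m * sigma x - sigma x) by ring.
    exact (orbit_vinv _ _ _ IH).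
Qed.

Lemma orbit_h_approach p x y t :
  orb p (x, y) -> siginv y <> 0 ->
  exists x', orb p (x', y) /\ Rabs (x' - t) <= Rabs (siginv y) / 2.
Proof.
  intros H Hs. destruct (exists_nearest_multiple (t - x) (siginv y) Hs) as [k Hk].
  exists (x + IZR k * siginv y); split; [exact (orbit_h_Z _ _ _ k H)|].
  rewrite Rabs_minus_sym.
  replace (t - (x + IZR k * siginv y)) with (t - x - IZR k * siginv y) by ring.
  exact Hk.
Qed.

Lemma orbit_v_reduce p x y :
  orb p (x, y) -> sigma x <> 0 ->
  exists y', orb p (x, y') /\ 0 < Rabs y' <= Rabs (sigma x).
Proof.
  intros H Hs. destruct (exists_frac_in_01 (y / sigma x)) as [j Hj].
  exists (y + IZR (- j) * sigma x); split; [exact (orbit_v_Z _ _ _ _ H)|].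
  rewrite opp_IZR.
  replace (y + - IZR j * sigma x) with (sigma x * (y / sigma x - IZR j)) by (field; exact Hs).
  rewrite Rabs_mult, (Rabs_pos_eq (_ - _)) by lra.
  pose proof (Rabs_pos_lt _ Hs). split; nra.
Qed.

Lemma Euclid_inverse p :
  p = h_gen sigma siginv (Euclid sigma siginv p) \/
  p = v_gen sigma siginv (Euclid sigma siginv p).
Proof.
  destruct p as [x y]; unfold Euclid, h_gen, v_gen; simpl.
  destruct (Rlt_dec y (sigma x)); [left | right]; simpl; f_equal; ring.
Qed.


Lemma Gamma_continuous g :
  (forall x, continuous sigma x) -> (forall y, continuous siginv y) ->
  Gam g -> forall p : R * R, continuous g p.
Proof.
  intros Hsigma Hsiginv Hg; induction Hg; intro p.
  - exact (@continuous_id (prod_UniformSpace R_UniformSpace R_UniformSpace) p).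
  - exact (continuous_comp g _ p (IHHg p) (shear_h_continuous siginv _ Hsiginv)).
  - apply (continuous_comp g _ p (IHHg p)).
    apply (continuous_ext (fun q : R * R => (fst q + - siginv (snd q), snd q))).
    + intros [x y]; reflexivity.
    + exact (shear_h_continuous _ _ (opp_continuous _ Hsiginv)).
  - exact (continuous_comp g _ p (IHHg p) (shear_v_continuous sigma _ Hsigma)).
  - apply (continuous_comp g _ p (IHHg p)).
    apply (continuous_ext (fun q : R * R => (fst q, - sigma (fst q) + snd q))).
    + intros [x y]; unfold v_gen_inv; simpl; f_equal; ring.
    + exact (shear_v_continuous _ _ (opp_continuous _ Hsigma)).
Qed.

Section Scaling.

Hypothesis sigma_mul : forall a b, sigma (a * b) = sigma a * sigma b.
Hypothesis siginv_mul : forall a b, siginv (a * b) = siginv a * siginv b.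
Hypothesis siginv_sigma : forall a, siginv (sigma a) = a.

Lemma Gamma_scale g : Gam g -> forall l p, g (scale sigma l p) = scale sigma l (g p).
Proof.
  intros Hg l; induction Hg; intro p; [reflexivity| | | |];
    rewrite IHHg; unfold scale, h_gen, h_gen_inv, v_gen, v_gen_inv; simpl; f_equal;
    rewrite ?siginv_mul, ?siginv_sigma, ?sigma_mul; ring.
Qed.

Lemma orbit_scale l p q : orb p q -> orb (scale sigma l p) (scale sigma l q).
Proof.
  intros [g [Hg ->]]. exists g; split; [exact Hg | symmetry; exact (Gamma_scale g Hg l p)].
Qed.

End Scaling.

End Generated_group.

(** * The homeomorphism sigma(x) = sgn(x) x^2 *)

Lemma sig2_abs x : sig2 x = x * Rabs x.
Proof.
  unfold sig2; destruct (Rle_dec 0 x).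
  - rewrite Rabs_pos_eq; lra.
  - rewrite Rabs_left; lra.
Qed.

Lemma sig2_nonneg x : 0 <= x -> sig2 x = x * x.
Proof. intro; rewrite sig2_abs, Rabs_pos_eq; lra. Qed.

Lemma sig2_nonpos x : x <= 0 -> sig2 x = - (x * x).
Proof. intro; rewrite sig2_abs, Rabs_left1; lra. Qed.

Lemma Rabs_sig2 x : Rabs (sig2 x) = x * x.
Proof. rewrite sig2_abs, Rabs_mult, Rabs_Rabsolu, <- Rabs_mult. apply Rabs_pos_eq; nra. Qed.

Lemma sig2_mul a b : sig2 (a * b) = sig2 a * sig2 b.
Proof. rewrite !sig2_abs, Rabs_mult; ring. Qed.

Lemma sig2_eq0 x : sig2 x = 0 -> x = 0.
Proof. intro H. pose proof (Rabs_sig2 x) as E. rewrite H, Rabs_R0 in E. nra. Qed.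

Lemma sig2_inv_nonneg y : 0 <= y -> sig2_inv y = sqrt y.
Proof. unfold sig2_inv; destruct (Rle_dec 0 y); lra. Qed.

Lemma sig2_inv_sqrt y : sig2_inv y = sqrt y - sqrt (- y).
Proof.
  unfold sig2_inv; destruct (Rle_dec 0 y).
  - destruct (Req_dec y 0) as [->|]; [rewrite Ropp_0, sqrt_0; ring|].
    rewrite (sqrt_neg_0 (- y)) by lra; ring.
  - rewrite (sqrt_neg_0 y) by lra; ring.
Qed.

Lemma sig2_inv_sig2 x : sig2_inv (sig2 x) = x.
Proof.
  unfold sig2, sig2_inv; destruct (Rle_dec 0 x); destruct (Rle_dec 0 _).
  - apply sqrt_square; lra.
  - nra.
  - assert (x = 0) as -> by nra. rewrite Rmult_0_l, Ropp_0, sqrt_0; ring.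
  - rewrite Ropp_involutive, <- Rmult_opp_opp, sqrt_square; lra.
Qed.

Lemma sig2_sig2_inv y : sig2 (sig2_inv y) = y.
Proof.
  unfold sig2_inv; destruct (Rle_dec 0 y).
  - rewrite sig2_nonneg by apply sqrt_pos. apply sqrt_sqrt; lra.
  - rewrite sig2_nonpos by (pose proof (sqrt_pos (- y)); lra).
    rewrite Rmult_opp_opp, sqrt_sqrt; lra.
Qed.

Lemma sig2_inv_mul a b : sig2_inv (a * b) = sig2_inv a * sig2_inv b.
Proof.
  rewrite <- (sig2_sig2_inv a), <- (sig2_sig2_inv b) at 1.
  rewrite <- sig2_mul. apply sig2_inv_sig2.
Qed.

Lemma sig2_inv_sqr y : sig2_inv y * sig2_inv y = Rabs y.
Proof. rewrite <- (sig2_sig2_inv y) at 3. symmetry; apply Rabs_sig2. Qed.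

Lemma sig2_inv_eq0 y : sig2_inv y = 0 -> y = 0.
Proof. intro H. rewrite <- (sig2_sig2_inv y), H, sig2_nonneg; lra. Qed.

Lemma sig2_continuous x : continuous sig2 x.
Proof.
  apply continuity_pt_filterlim, (continuity_pt_ext (fun t => t * Rabs t));
    [intro t; symmetry; apply sig2_abs|].
  apply continuity_pt_mult; [apply continuity_pt_id | apply Rcontinuity_abs].
Qed.

Lemma sig2_inv_continuous y : continuous sig2_inv y.
Proof.
  assert (Hsqrt : forall t, continuity_pt sqrt t)
    by (intro t; apply continuity_pt_filterlim, continuous_sqrt).
  apply continuity_pt_filterlim, (continuity_pt_ext (fun t => sqrt t - sqrt (- t)));
    [intro t; symmetry; apply sig2_inv_sqrt|].
  apply continuity_pt_minus; [apply Hsqrt|].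
  apply (continuity_pt_comp Ropp sqrt); [apply continuity_pt_opp, continuity_pt_id | apply Hsqrt].
Qed.

(** * Density of the orbits *)

Local Notation orb := (orbit sig2 sig2_inv).
Local Notation Gam := (Gamma sig2 sig2_inv).

Lemma orbit_one_small_fst d :
  0 < d -> exists a b, orb (1, 0) (a, b) /\ 0 < Rabs a < d.
Proof.
  intro Hd. destruct (archimed (/ d)) as [HK _].
  set (k := up (/ d)) in HK. set (K := IZR k) in HK.
  assert (HKd : 1 < K * d) by (rewrite <- (Rinv_l d) by lra; apply Rmult_lt_compat_r; lra).
  assert (HK0 : 0 < K) by (pose proof (Rinv_0_lt_compat d Hd); lra).
  assert (H1 : orb (1, 0) (1, 1)).
  { replace 1 with (sig2 1 + 0) at 3 by (rewrite sig2_nonneg; lra).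
    exact (orbit_v _ _ _ (orbit_refl _)). }
  assert (H2 : orb (1, 0) (K, 1)).
  { replace K with (1 + IZR (k - 1) * sig2_inv 1) at 1
      by (rewrite sig2_inv_nonneg, sqrt_1, minus_IZR by lra; unfold K; ring).
    exact (orbit_h_Z _ _ _ _ H1). }
  assert (H3 : orb (1, 0) (K - sqrt (K * K + 1), K * K + 1)).
  { rewrite <- sig2_inv_nonneg by nra.
    replace (K * K + 1) with (sig2 K + 1) by (rewrite sig2_nonneg; lra).
    exact (orbit_hinv _ _ _ (orbit_v _ _ _ H2)). }
  exists (K - sqrt (K * K + 1)), (K * K + 1); split; [exact H3|].
  set (S := sqrt (K * K + 1)) in *.
  (* K - S = - 1 / (K + S) *)
  assert (HS : S * S = K * K + 1) by (apply sqrt_sqrt; nra).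
  assert (HS0 : 0 <= S) by apply sqrt_pos.
  assert (HSK : K < S) by nra.
  rewrite Rabs_left by lra. split; nra.
Qed.

Lemma orbit_axis_small_fst x0 d :
  x0 <> 0 -> 0 < d -> exists a b, orb (x0, 0) (a, b) /\ 0 < Rabs a < d.
Proof.
  intros Hx Hd. pose proof (Rabs_pos_lt _ Hx) as Hx'.
  destruct (orbit_one_small_fst (d / Rabs x0)) as [a [b [Hab Ha]]];
    [apply Rdiv_lt_0_compat; lra|].
  exists (x0 * a), (sig2 x0 * b); split.
  - replace (x0, 0) with (scale sig2 x0 (1, 0)) by (unfold scale; simpl; f_equal; ring).
    exact (orbit_scale sig2_mul sig2_inv_mul sig2_inv_sig2 _ _ _ Hab).
  - rewrite Rabs_mult.
    assert (Rabs x0 * (d / Rabs x0) = d) by (field; lra). split; nra.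
Qed.

(* Reduce x modulo sigma^-1(y) to |x0| <= |sigma^-1(y)| / 2, then y modulo sigma(x0):
   |y'| <= x0^2 <= |y| / 4.  If x0 = 0, one more h and v^-1 land on the axis instead. *)
Lemma orbit_snd_quarter p x y :
  orb p (x, y) -> y <> 0 ->
  (exists s, s <> 0 /\ orb p (s, 0)) \/
  (exists q, orb p q /\ 0 < Rabs (snd q) <= Rabs y / 4).
Proof.
  intros H Hy. set (s := sig2_inv y).
  assert (Hs : s <> 0) by (intro E; apply Hy, sig2_inv_eq0, E).
  destruct (orbit_h_approach p x y 0 H Hs) as [x0 [H0 Hx0]].
  rewrite Rminus_0_r in Hx0. fold s in Hx0.
  destruct (Req_dec x0 0) as [->|Hx0'].
  - left. exists s; split; [exact Hs|].
    replace (s, 0) with (0 + s, y - sig2 (0 + s))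
      by (unfold s; rewrite Rplus_0_l, sig2_sig2_inv; f_equal; ring).
    exact (orbit_vinv _ _ _ (orbit_h _ _ _ H0)).
  - right. destruct (orbit_v_reduce p x0 y H0) as [y' [H1 Hy']].
    { intro E; apply Hx0', sig2_eq0, E. }
    exists (x0, y'); split; [exact H1|]. simpl.
    rewrite Rabs_sig2 in Hy'.
    pose proof (sig2_inv_sqr y) as Hss. fold s in Hss.
    rewrite <- (Rabs_pos_eq (x0 * x0)), Rabs_mult in Hy' by nra.
    rewrite <- (Rabs_pos_eq (s * s)), Rabs_mult in Hss by nra.
    pose proof (Rabs_pos x0). split; nra.
Qed.

Lemma orbit_axis_small_snd x0 d :
  x0 <> 0 -> 0 < d -> exists q, orb (x0, 0) q /\ 0 < Rabs (snd q) < d.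
Proof.
  intros Hx Hd.
  destruct (orbit_axis_small_fst x0 (Rmin 1 d) Hx) as [a [b [Hab [Ha0 Ha]]]];
    [apply Rmin_glb_lt; lra|].
  pose proof (Rmin_l 1 d). pose proof (Rmin_r 1 d).
  destruct (orbit_v_reduce _ a b Hab) as [b' [Hb' Hb'']].
  { intro E. apply sig2_eq0 in E. rewrite E, Rabs_R0 in Ha0. lra. }
  exists (a, b'); split; [exact Hb'|]. simpl.
  rewrite Rabs_sig2, <- (Rabs_pos_eq (a * a)), Rabs_mult in Hb'' by nra.
  split; nra.
Qed.

Lemma orbit_small_snd p d :
  p <> (0, 0) -> 0 < d -> exists q, orb p q /\ 0 < Rabs (snd q) < d.
Proof.
  intros Hp Hd.
  assert (Haxis : forall s, s <> 0 -> orb p (s, 0) ->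
            exists q, orb p q /\ 0 < Rabs (snd q) < d).
  { intros s Hs Hps. destruct (orbit_axis_small_snd s d Hs Hd) as [q [Hq Hq']].
    exists q; split; [exact (orbit_trans _ _ _ Hps Hq) | exact Hq']. }
  assert (Hdesc : forall N q, orb p q -> snd q <> 0 -> Rabs (snd q) < d * 4 ^ N ->
            exists q', orb p q' /\ 0 < Rabs (snd q') < d).
  { induction N as [|N IH]; intros [x y] Hq Hy HyN; simpl in Hy, HyN.
    - exists (x, y); split; [exact Hq|]. simpl. split; [apply Rabs_pos_lt; exact Hy | lra].
    - destruct (orbit_snd_quarter p x y Hq Hy) as [[s [Hs Hps]] | [q' [Hq' Hy']]].
      + exact (Haxis s Hs Hps).
      + apply (IH q' Hq'); [intro E; rewrite E, Rabs_R0 in Hy'; lra | lra]. }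
  destruct p as [x y]. destruct (Req_dec y 0) as [->|Hy].
  - apply (Haxis x); [intros ->; now apply Hp | apply orbit_refl].
  - destruct (Pow_x_infinity 4 ltac:(rewrite Rabs_pos_eq; lra) (Rabs y / d + 1)) as [N HN].
    apply (Hdesc N (x, y) (orbit_refl _) Hy). simpl.
    specialize (HN N (Nat.le_refl N)). rewrite Rabs_pos_eq in HN by (apply pow_le; lra).
    assert (Rabs y / d * d = Rabs y) by (field; lra). nra.
Qed.

Lemma orbit_adherent_axis p t : p <> (0, 0) -> adherent (orb p) (t, 0).
Proof.
  intros Hp P [eps Heps]. pose proof (cond_pos eps) as He.
  destruct (orbit_small_snd p (Rmin eps (eps * eps)) Hp) as [[a b] [Hab [Hb0 Hb]]];
    [apply Rmin_glb_lt; nra|].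
  simpl in Hb0, Hb. pose proof (Rmin_l eps (eps * eps)). pose proof (Rmin_r eps (eps * eps)).
  assert (Hs : sig2_inv b <> 0).
  { intro E. apply sig2_inv_eq0 in E. rewrite E, Rabs_R0 in Hb0. lra. }
  destruct (orbit_h_approach p a b t Hab Hs) as [x [Hx Hxt]].
  exists (x, b); split; [exact Hx|]. apply Heps, ball_pt; simpl.
  pose proof (sig2_inv_sqr b) as Hss.
  rewrite <- (Rabs_pos_eq (_ * _)), Rabs_mult in Hss by nra.
  pose proof (Rabs_pos (sig2_inv b)). rewrite Rminus_0_r. split; nra.
Qed.

Definition offset (n : nat) : R := INR n / sqrt (2 * INR n + 1).

(* The path (1,0) -> (1,(n+1)^2) -> (-n,(n+1)^2) -> (-n,2n+1) -> (-n + m s, s^2) -> ...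
   by v^((n+1)^2), h^-1, v, h^m, v^i, where s = sqrt(2n+1) and -n + m s = s w with
   w = m - offset n.  Its endpoint (a, b) has b / sigma(a) = 1 / sigma(w) + i. *)
Lemma orbit_one_family (n : nat) (m i : Z) :
  orb (1, 0) (sqrt (2 * INR n + 1) * (IZR m - offset n),
              (2 * INR n + 1) * (1 + IZR i * sig2 (IZR m - offset n))).
Proof.
  unfold offset. set (N := INR n). set (s := sqrt (2 * N + 1)).
  assert (HN : 0 <= N) by apply pos_INR.
  assert (Hs : s * s = 2 * N + 1) by (apply sqrt_sqrt; lra).
  assert (Hs0 : 0 < s) by (apply sqrt_lt_R0; lra).
  assert (H1 : orb (1, 0) (1, (N + 1) * (N + 1))).
  { replace ((N + 1) * (N + 1)) with (0 + IZR (Z.of_nat ((n + 1) * (n + 1))) * sig2 1)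
      by (rewrite <- INR_IZR_INZ, mult_INR, plus_INR, sig2_nonneg by lra; simpl; unfold N; ring).
    exact (orbit_v_Z _ _ _ _ (orbit_refl _)). }
  assert (H2 : orb (1, 0) (- N, (N + 1) * (N + 1))).
  { replace (- N) with (1 - sig2_inv ((N + 1) * (N + 1)))
      by (rewrite sig2_inv_nonneg, sqrt_square by nra; ring).
    exact (orbit_hinv _ _ _ H1). }
  assert (H3 : orb (1, 0) (- N, s * s)).
  { replace (s * s) with (sig2 (- N) + (N + 1) * (N + 1))
      by (rewrite Hs, sig2_nonpos by lra; ring).
    exact (orbit_v _ _ _ H2). }
  assert (H4 : orb (1, 0) (s * (IZR m - N / s), s * s)).
  { replace (s * (IZR m - N / s)) with (- N + IZR m * sig2_inv (s * s))
      by (rewrite sig2_inv_nonneg, sqrt_square by lra; field; lra).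
    exact (orbit_h_Z _ _ _ m H3). }
  replace ((2 * N + 1) * (1 + IZR i * sig2 (IZR m - N / s)))
    with (s * s + IZR i * sig2 (s * (IZR m - N / s)))
    by (rewrite sig2_mul, (sig2_nonneg s), Hs by lra; ring).
  exact (orbit_v_Z _ _ _ i H4).
Qed.

Definition one_orbit_ratio (c : R) : Prop :=
  exists a b, orb (1, 0) (a, b) /\ a <> 0 /\ c = b / sig2 a.

Lemma one_orbit_ratio_offset n m i :
  IZR m - offset n <> 0 -> one_orbit_ratio (/ sig2 (IZR m - offset n) + IZR i).
Proof.
  intro Hw. pose proof (orbit_one_family n m i) as H.
  set (w := IZR m - offset n) in *. set (s := sqrt (2 * INR n + 1)) in *.
  assert (Hs : s * s = 2 * INR n + 1) by (apply sqrt_sqrt; pose proof (pos_INR n); lra).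
  assert (Hs0 : 0 < s) by (apply sqrt_lt_R0; pose proof (pos_INR n); lra).
  assert (Hw' : sig2 w <> 0) by (intro E; apply Hw, sig2_eq0, E).
  exists (s * w), ((2 * INR n + 1) * (1 + IZR i * sig2 w)); split; [exact H|split].
  - apply Rmult_integral_contrapositive; split; lra.
  - rewrite sig2_mul, (sig2_nonneg s), Hs by lra.
    field. split; [exact Hw' | pose proof (pos_INR n); lra].
Qed.

Lemma offset_step n : offset (S n) - offset n <= / sqrt (2 * INR n + 1).
Proof.
  unfold offset. rewrite S_INR.
  assert (HN : 0 <= INR n) by apply pos_INR.
  assert (Hs : 0 < sqrt (2 * INR n + 1)) by (apply sqrt_lt_R0; lra).
  assert (Hs' : sqrt (2 * INR n + 1) <= sqrt (2 * (INR n + 1) + 1)) by (apply sqrt_le_1_alt; lra).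
  assert ((INR n + 1) / sqrt (2 * (INR n + 1) + 1) <= (INR n + 1) / sqrt (2 * INR n + 1)).
  { apply Rmult_le_compat_l; [lra | apply Rinv_le_contravar; lra]. }
  assert ((INR n + 1) / sqrt (2 * INR n + 1) - INR n / sqrt (2 * INR n + 1)
          = / sqrt (2 * INR n + 1)) by (field; lra).
  lra.
Qed.

Lemma offset_steps_small eps :
  0 < eps -> exists N, forall n, (N <= n)%nat -> offset (S n) - offset n < eps.
Proof.
  intro He. destruct (INR_unbounded (/ (eps * eps))) as [N HN].
  exists N. intros n Hn. apply le_INR in Hn.
  assert (Hs : sqrt (2 * INR n + 1) * sqrt (2 * INR n + 1) = 2 * INR n + 1)
    by (apply sqrt_sqrt; pose proof (pos_INR n); lra).
  assert (Hs0 : 0 < sqrt (2 * INR n + 1)) by (apply sqrt_lt_R0; pose proof (pos_INR n); lra).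
  set (s := sqrt (2 * INR n + 1)) in *.
  assert (He2 : 0 < eps * eps) by nra.
  assert (HNe : 1 < eps * eps * INR N).
  { rewrite <- (Rinv_r (eps * eps)) by lra. apply Rmult_lt_compat_l; lra. }
  assert (H1 : 1 < eps * s).
  { assert (eps * eps * INR N <= eps * eps * INR n) by (apply Rmult_le_compat_l; lra).
    assert (1 < eps * eps * (s * s)) by (rewrite Hs; pose proof (pos_INR n); lra).
    assert (0 < eps * s) by (apply Rmult_lt_0_compat; lra). nra. }
  assert (/ s < eps).
  { apply (Rmult_lt_reg_r s); [lra|]. rewrite Rinv_l by lra. lra. }
  pose proof (offset_step n). fold s in H0. lra.
Qed.

Lemma offset_unbounded L N : exists n, (N <= n)%nat /\ L <= offset n.
Proof.
  destruct (INR_unbounded (3 * L * L + 1)) as [k Hk].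
  exists (N + k)%nat; split; [lia|].
  unfold offset. assert (Hx : INR k <= INR (N + k)) by (apply le_INR; lia).
  set (x := INR (N + k)) in *.
  assert (Hs : sqrt (2 * x + 1) * sqrt (2 * x + 1) = 2 * x + 1)
    by (apply sqrt_sqrt; pose proof (pos_INR k); nra).
  assert (Hs0 : 0 < sqrt (2 * x + 1)) by (apply sqrt_lt_R0; pose proof (pos_INR k); nra).
  set (s := sqrt (2 * x + 1)) in *.
  apply (Rmult_le_reg_r s); [lra|]. replace (x / s * s) with x by (field; lra).
  destruct (Rle_dec L 0); [nra|].
  assert (0 <= L * L) by nra.
  assert (x * (3 * L * L + 1) <= x * x) by (apply Rmult_le_compat_l; lra).
  assert (0 <= L * L * (x - 1)) by (apply Rmult_le_pos; nra).
  assert (L * L * (s * s) <= x * x) by (rewrite Hs; lra).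
  assert (0 < L * s) by (apply Rmult_lt_0_compat; lra). nra.
Qed.

Lemma one_orbit_ratio_dense (c : R) : adherent one_orbit_ratio c.
Proof.
  destruct (archimed c) as [Hc1 Hc2]. set (i := (up c - 2)%Z).
  assert (Hr : 1 <= c - IZR i) by (unfold i; rewrite minus_IZR; lra).
  set (w0 := / sqrt (c - IZR i)).
  assert (Hw0 : 0 < w0) by (apply Rinv_0_lt_compat, sqrt_lt_R0; lra).
  assert (Hc : c = / sig2 w0 + IZR i).
  { rewrite sig2_nonneg by lra. unfold w0.
    rewrite <- Rinv_mult, sqrt_sqrt, Rinv_inv by lra. ring. }
  rewrite Hc.
  apply (adherent_continuous (fun w => (exists n m, w = IZR m - offset n) /\ 0 < w) _
           (fun w => / sig2 w + IZR i) w0).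
  - intros w [[n [m ->]] Hw]. apply one_orbit_ratio_offset. lra.
  - apply continuity_pt_filterlim.
    apply (continuity_pt_plus (fun w => / sig2 w) (fun _ => IZR i)).
    + apply (continuity_pt_inv sig2); [apply continuity_pt_filterlim, sig2_continuous|].
      rewrite sig2_nonneg; nra.
    + apply continuity_pt_const. intros ? ?; reflexivity.
  - apply adherent_locally.
    + apply shifts_adherent; [exact offset_steps_small | exact offset_unbounded].
    + exact (open_gt 0 w0 Hw0).
Qed.

Definition axis_images (r : pt) : Prop := exists g t, Gam g /\ r = g (t, 0).

Lemma axis_images_adherent (q : pt) : adherent axis_images q.
Proof.
  apply (adherent_trans _ (fun r : pt => fst r <> 0)); [|apply adherent_fst_neq0].
  intros [u v] Hu; simpl in Hu. change R in u, v.
  assert (Hsu : sig2 u <> 0) by (intro E; apply Hu, sig2_eq0, E).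
  assert (Hv : v = sig2 u * (v / sig2 u)) by (field; exact Hsu).
  rewrite Hv at 1.
  apply (adherent_continuous one_orbit_ratio _ (fun c => (u, sig2 u * c)) (v / sig2 u)).
  - intros c [a [b [[g [Hg Hab]] [Ha ->]]]].
    (* g (u/a, 0) = scale (u/a) (g (1,0)) = (u, sigma(u) * (b / sigma(a))) *)
    exists g, (u / a); split; [exact Hg|].
    replace (u / a, 0) with (scale sig2 (u / a) (1, 0)) by (unfold scale; simpl; f_equal; ring).
    rewrite (Gamma_scale sig2_mul sig2_inv_mul sig2_inv_sig2 g Hg), <- Hab.
    assert (Hsa : sig2 a <> 0) by (intro E; apply Ha, sig2_eq0, E).
    assert (E : sig2 (u / a) * sig2 a = sig2 u)
      by (rewrite <- sig2_mul; f_equal; field; exact Ha).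
    unfold scale; simpl. rewrite <- E. f_equal; field; assumption.
  - apply continuous_pair; [apply continuous_const|].
    apply continuity_pt_filterlim, (continuity_pt_mult (fun _ => sig2 u) (fun c => c)).
    + apply continuity_pt_const. intros ? ?; reflexivity.
    + apply continuity_pt_id.
  - apply one_orbit_ratio_dense.
Qed.

Lemma orbit_dense p : p <> (0, 0) -> dense2 (orb p).
Proof.
  intro Hp. apply dense2_of_adherent. intro q.
  apply (adherent_trans _ axis_images); [|apply axis_images_adherent].
  intros r [g [t [Hg ->]]].
  apply (adherent_continuous (orb p)).
  - intros s Hs. exact (orbit_Gamma _ _ _ Hs Hg).
  - exact (Gamma_continuous g sig2_continuous sig2_inv_continuous Hg (t, 0)).
  - apply orbit_adherent_axis, Hp.
Qed.

(** * Discreteness of the backward set *)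

Lemma iter_fixed {A : Type} (f : A -> A) (x : A) (n : nat) : f x = x -> Nat.iter n f x = x.
Proof.
  intro H. apply (Nat.iter_invariant n A f (fun y => y = x)); [intros y ->; exact H | reflexivity].
Qed.

Local Notation Esig := (Euclid sig2 sig2_inv).

Lemma Euclid_sig2_quadrant x y :
  0 <= x -> 0 <= y ->
  Esig (x, y) = if Rlt_dec y (x * x) then (x - sqrt y, y) else (x, y - x * x).
Proof.
  intros Hx Hy. unfold Euclid; simpl.
  rewrite sig2_nonneg, sig2_inv_nonneg by assumption. reflexivity.
Qed.

Lemma Euclid_nonneg_quadrant p : nonneg_quadrant p -> nonneg_quadrant (Esig p).
Proof.
  destruct p as [x y]; unfold nonneg_quadrant; simpl; intros [Hx Hy].
  rewrite Euclid_sig2_quadrant by assumption.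
  destruct (Rlt_dec y (x * x)); simpl; [|lra].
  split; [|exact Hy].
  rewrite <- (sqrt_square x) at 1 by exact Hx. enough (sqrt y <= sqrt (x * x)) by lra.
  apply sqrt_le_1_alt; lra.
Qed.

Lemma Euclid_one : Esig (1, 0) = (1, 0).
Proof.
  rewrite Euclid_sig2_quadrant by lra. destruct (Rlt_dec 0 (1 * 1)); [|lra].
  rewrite sqrt_0. f_equal; ring.
Qed.

Definition reaches_one (p : pt) : Prop :=
  nonneg_quadrant p /\ exists k, Nat.iter k Esig p = (1, 0).

Lemma backward_set_reaches_one p : backward_set sig2 sig2_inv p -> reaches_one p.
Proof.
  intros [n [k [Hq Hk]]]. split; [exact Hq|].
  exists k. rewrite Hk. exact (iter_fixed _ _ n Euclid_one).
Qed.

Lemma reaches_one_bounds p : reaches_one p -> 1 <= fst p /\ (snd p = 0 \/ 1 <= snd p).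
Proof.
  intros [Hq [k Hk]]. revert p Hq Hk. induction k as [|k IH]; intros [x y] Hq Hk.
  - simpl in Hk. injection Hk as -> ->. simpl. lra.
  - rewrite Nat.iter_succ_r in Hk.
    destruct (IH _ (Euclid_nonneg_quadrant _ Hq) Hk) as [H1 H2].
    destruct Hq as [Hx Hy]; simpl in *.
    rewrite Euclid_sig2_quadrant in H1, H2 by assumption.
    destruct (Rlt_dec y (x * x)); simpl in H1, H2.
    + pose proof (sqrt_pos y). split; [lra | exact H2].
    + split; [exact H1|]. right. nra.
Qed.

Lemma Euclid_descent p :
  reaches_one p -> p <> (1, 0) ->
  reaches_one (Esig p) /\ fst (Esig p) + snd (Esig p) <= fst p + snd p - 1.
Proof.
  intros Hp Hne. destruct (reaches_one_bounds p Hp) as [Hx Hy].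
  destruct Hp as [Hq [[|k] Hk]]; [contradiction|].
  rewrite Nat.iter_succ_r in Hk.
  split; [split; [apply Euclid_nonneg_quadrant, Hq | exists k; exact Hk]|].
  destruct p as [x y]; simpl in *.
  rewrite Euclid_sig2_quadrant by lra.
  destruct Hy as [->|Hy].
  - exfalso. apply Hne.
    assert (Hfix : Esig (x, 0) = (x, 0)).
    { rewrite Euclid_sig2_quadrant by lra. destruct (Rlt_dec 0 (x * x)); [|nra].
      rewrite sqrt_0. f_equal; ring. }
    rewrite Hfix, iter_fixed in Hk by exact Hfix. exact Hk.
  - destruct (Rlt_dec y (x * x)); simpl.
    + enough (1 <= sqrt y) by lra. rewrite <- sqrt_1. apply sqrt_le_1_alt; lra.
    + nra.
Qed.

Lemma reaches_one_finite (n : nat) :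
  exists L, forall p, reaches_one p -> fst p + snd p <= INR n -> In p L.
Proof.
  induction n as [|n [L HL]].
  - exists nil. intros p Hp Hs. destruct (reaches_one_bounds p Hp) as [H1 H2].
    destruct Hp as [[_ Hy] _]. simpl in Hs. lra.
  - exists ((1, 0) :: flat_map (fun q => h_gen sig2 sig2_inv q :: v_gen sig2 sig2_inv q :: nil) L).
    intros p Hp Hs. destruct (classic (p = (1, 0))) as [->|Hne]; [left; reflexivity|right].
    destruct (Euclid_descent p Hp Hne) as [HE HEs]. rewrite S_INR in Hs.
    apply in_flat_map. exists (Esig p). split; [apply HL; [exact HE | lra]|].
    destruct (Euclid_inverse (sigma := sig2) (siginv := sig2_inv) p) as [Hh|Hv];
      [left | right; left]; symmetry; assumption.
Qed.

Lemma list_separated (L : list pt) (p : pt) :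
  exists e, 0 < e /\ forall q, In q L -> q <> p -> e <= dist2 p q.
Proof.
  induction L as [|a L [e [He H]]].
  - exists 1. split; [lra | intros q []].
  - destruct (classic (a = p)) as [->|Hne].
    + exists e. split; [exact He|]. intros q [<-|Hq] Hqp; [contradiction | exact (H q Hq Hqp)].
    + exists (Rmin e (dist2 p a)). split; [apply Rmin_glb_lt; [exact He | apply dist2_pos; auto]|].
      intros q [<-|Hq] Hqp; [apply Rmin_r|].
      eapply Rle_trans; [apply Rmin_l | exact (H q Hq Hqp)].
Qed.

Lemma backward_set_discrete : discrete2 (backward_set sig2 sig2_inv).
Proof.
  intros p Hp.
  destruct (INR_unbounded (fst p + snd p + 2)) as [n Hn].
  destruct (reaches_one_finite n) as [L HL].
  destruct (list_separated L p) as [e [He Hsep]].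
  exists (Rmin e 1). split; [apply Rmin_glb_lt; lra|].
  intros q Hq Hd. pose proof (Rmin_l e 1). pose proof (Rmin_r e 1).
  destruct (classic (q = p)) as [->|Hne]; [reflexivity|exfalso].
  destruct (abs_le_dist2 p q) as [Dx Dy].
  assert (Hx : Rabs (fst p - fst q) < 1) by lra.
  assert (Hy : Rabs (snd p - snd q) < 1) by lra.
  apply Rabs_def2 in Hx, Hy.
  assert (HqL : In q L) by (apply HL; [exact (backward_set_reaches_one q Hq) | lra]).
  pose proof (Hsep q HqL Hne). lra.
Qed.

Theorem theorem2 :
  (forall p : pt, p <> (0, 0) -> dense2 (orbit sig2 sig2_inv p)) /\
  (forall p, backward_set sig2 sig2_inv p -> nonneg_quadrant p) /\
  discrete2 (backward_set sig2 sig2_inv).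
Proof.
  split; [exact orbit_dense|split].
  - intros p Hp. exact (proj1 (backward_set_reaches_one p Hp)).
  - exact backward_set_discrete.
Qed.
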